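(* Let $A,B,D\subset\mathbb R^n$ and let $\varphi: D\times B\to\mathbb R^n$ satisfy: (a) there is $C_0>0$ such that $\|\varphi(t,x)-\varphi(t,y)\|\le C_0\|x-y\|$ for all $x,y\in B$, $t\in D$; (b) there is $M_0>0$ such that $\|\varphi(t',x)-\varphi(t,x)\|\ge M_0\|t'-t\|$ for all $x\in B$ and $t,t'\in D$. Then the set $\Delta:=\{t\in D:\ \varphi(t,B)\cap A\ne\varnothing\}$ satisfies $\dim_H\Delta\le\min\{\dim_H(A\times B),\dim_H D\}$. Moreover, if $A$ and $B$ are compact and $\varphi$ is continuous, then $\Delta$ is closed in $D$.
   Context: $\dim_H$ denotes Hausdorff dimension; $A\times B\subset\mathbb R^{2n}$ with the Euclidean metric. *)

From Stdlib Require Import Reals Lra List Classical ClassicalEpsilon.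
Open Scope R_scope.

Section Metric.
Context {X : Type} (d : X -> X -> R).

Definition is_diam (U : X -> Prop) (r : R) : Prop :=
  ((forall x, ~ U x) /\ r = 0) \/
  ((exists x, U x) /\ is_lub (fun v => exists x y, U x /\ U y /\ v = d x y) r).

(* contribution diam(U)^s of a set U with diameter r to an s-dimensional
   Hausdorff sum; the empty set contributes 0, and 0^0 = 1 for nonempty sets *)
Definition hterm (U : X -> Prop) (r s : R) : R :=
  if excluded_middle_informative (exists x, U x) then
    (if Req_EM_T r 0 then (if Req_EM_T s 0 then 1 else 0) else Rpower r s)
  else 0.

Fixpoint psum (f : nat -> R) (N : nat) : R :=
  match N with O => f O | S k => psum f k + f (S k) end.

(* H^s_delta(E) < eps : there is a countable delta-cover of E with
   sum of diam^s (an infinite series of nonnegative terms) strictly below eps *)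
Definition Hcontent_lt (s delta : R) (E : X -> Prop) (eps : R) : Prop :=
  exists (U : nat -> X -> Prop) (r : nat -> R) (c : R),
    (forall x, E x -> exists i, U i x) /\
    (forall i, is_diam (U i) (r i) /\ r i <= delta) /\
    (forall N, psum (fun i => hterm (U i) (r i) s) N <= c) /\ c < eps.

(* H^s(E) = 0, where H^s(E) = sup_{delta>0} H^s_delta(E) and
   H^s_delta(E) = inf over countable delta-covers of sum diam^s (values in [0,+oo]) *)
Definition Hnull (s : R) (E : X -> Prop) : Prop :=
  forall delta eps, 0 < delta -> 0 < eps -> Hcontent_lt s delta E eps.

Definition mopen (U : X -> Prop) : Prop :=
  forall x, U x -> exists eps, 0 < eps /\ forall y, d x y < eps -> U y.

Definition mcompact (K : X -> Prop) : Prop :=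
  forall (I : Type) (U : I -> X -> Prop),
    (forall i, mopen (U i)) -> (forall x, K x -> exists i, U i x) ->
    exists l : list I, forall x, K x -> exists i, In i l /\ U i x.

Definition closed_in (D S : X -> Prop) : Prop :=
  (forall x, S x -> D x) /\
  forall x, D x -> (forall eps, 0 < eps -> exists y, S y /\ d x y < eps) -> S x.

End Metric.

Inductive Rbar := Finite (x : R) | p_infty.
Definition Rbar_le (a b : Rbar) : Prop :=
  match a, b with
  | _, p_infty => True
  | p_infty, Finite _ => False
  | Finite x, Finite y => x <= y
  end.
Definition Rbar_min (a b : Rbar) : Rbar :=
  match a, b with
  | p_infty, _ => b
  | _, p_infty => a
  | Finite x, Finite y => Finite (Rmin x y)
  end.

Definition is_glb_R (S : R -> Prop) (m : R) : Prop :=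
  (forall s, S s -> m <= s) /\ (forall l, (forall s, S s -> l <= s) -> l <= m).

(* Hausdorff dimension: dim_H E = inf { s >= 0 : H^s(E) = 0 } (= +oo if empty set) *)
Definition hdim {X : Type} (d : X -> X -> R) (E : X -> Prop) : Rbar :=
  let S := fun s => 0 <= s /\ Hnull d s E in
  if excluded_middle_informative (exists s, S s)
  then Finite (epsilon (inhabits 0) (is_glb_R S))
  else p_infty.

Definition Rn (n : nat) : Type := { v : nat -> R | forall i, (n <= i)%nat -> v i = 0 }.
Definition coord {n} (v : Rn n) (i : nat) : R := proj1_sig v i.

Fixpoint sqsum (n : nat) (f : nat -> R) : R :=
  match n with O => 0 | S k => sqsum k f + f k * f k end.

Definition edist (n : nat) (x y : Rn n) : R :=
  sqrt (sqsum n (fun i => coord x i - coord y i)).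

(* Euclidean distance on R^n x R^n = R^{2n} *)
Definition edist2 (n : nat) (p q : Rn n * Rn n) : R :=
  sqrt (sqsum n (fun i => coord (fst p) i - coord (fst q) i)
      + sqsum n (fun i => coord (snd p) i - coord (snd q) i)).

(* The parameter map inverts the relation a = phi(t, x): by (b), (a) and the triangle
   inequality, M0 |t - t'| <= (1 + C0) |(a, x) - (a', x')| whenever a = phi(t, x) and
   a' = phi(t', x').  Hence Delta is the image of a subset of A x B under a Lipschitz
   correspondence, and such images cannot have larger Hausdorff dimension; Delta is also
   a subset of D.  For closedness, if t in D is not in Delta then, by compactness of A,
   each phi(t, x) (x in B) has a positive distance to A, continuity keeps phi(t', x')
   away from A near (t, x), and compactness of B makes the radius uniform in x. *)
From Stdlib Require Import Reals Lra Psatz Lia List Classical ClassicalEpsilon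
  FunctionalExtensionality.
Open Scope R_scope.

Lemma sqsum_nonneg n f : 0 <= sqsum n f.
Proof. induction n; simpl; nra. Qed.

Lemma sqsum_ext_sq n f g : (forall i, f i * f i = g i * g i) -> sqsum n f = sqsum n g.
Proof. intro H; induction n; simpl; [reflexivity | rewrite IHn, H; reflexivity]. Qed.

Lemma sqsum_const0 n : sqsum n (fun _ => 0) = 0.
Proof. induction n; simpl; [reflexivity | rewrite IHn; ring]. Qed.

Lemma sqsum_eq0 n f : sqsum n f = 0 -> forall i, (i < n)%nat -> f i = 0.
Proof.
  induction n as [|n IH]; intros H i Hi; [lia|]. simpl in H.
  pose proof (sqsum_nonneg n f).
  assert (Hn : f n * f n = 0) by nra. assert (Hk : sqsum n f = 0) by nra.
  destruct (Nat.eq_dec i n) as [->|Hin]; [nra | apply IH; auto; lia].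
Qed.

Fixpoint dotsum (n : nat) (f g : nat -> R) : R :=
  match n with O => 0 | S k => dotsum k f g + f k * g k end.

Lemma sqsum_add n f g :
  sqsum n (fun i => f i + g i) = sqsum n f + 2 * dotsum n f g + sqsum n g.
Proof. induction n; simpl; [ring | rewrite IHn; ring]. Qed.

Lemma cauchy_schwarz n f g : dotsum n f g * dotsum n f g <= sqsum n f * sqsum n g.
Proof.
  induction n as [|n IH]; simpl; [nra|].
  pose proof (sqsum_nonneg n f) as HP. pose proof (sqsum_nonneg n g) as HQ.
  set (P := sqsum n f) in *. set (Q := sqsum n g) in *. set (S := dotsum n f g) in *.
  set (x := f n). set (y := g n).
  assert (Hcross : 2 * S * x * y <= P * y * y + Q * x * x).
  { destruct (Req_dec P 0) as [E|E].
    - assert (S = 0) by nra. subst S. rewrite E in *. nra.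
    - assert (HPQ : 0 <= (P * Q - S * S) * (x * x))
        by (apply Rmult_le_pos; [lra | apply Rle_0_sqr]).
      assert (P * (P * y * y + Q * x * x - 2 * S * x * y) >= 0).
      { replace (P * (P * y * y + Q * x * x - 2 * S * x * y))
          with ((P * y - S * x) * (P * y - S * x) + (P * Q - S * S) * (x * x)) by ring.
        pose proof (Rle_0_sqr (P * y - S * x)). unfold Rsqr in *. lra. }
      nra. }
  nra.
Qed.

Lemma sqrt_add_le a b : 0 <= a -> 0 <= b -> sqrt (a + b) <= sqrt a + sqrt b.
Proof.
  intros Ha Hb.
  pose proof (sqrt_pos a). pose proof (sqrt_pos b).
  pose proof (sqrt_sqrt _ Ha). pose proof (sqrt_sqrt _ Hb).
  rewrite <- (sqrt_square (sqrt a + sqrt b)) by lra.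
  apply sqrt_le_1_alt. nra.
Qed.

Lemma minkowski n f g :
  sqrt (sqsum n (fun i => f i + g i)) <= sqrt (sqsum n f) + sqrt (sqsum n g).
Proof.
  rewrite sqsum_add.
  pose proof (sqsum_nonneg n f) as HP. pose proof (sqsum_nonneg n g) as HQ.
  pose proof (cauchy_schwarz n f g) as HC.
  pose proof (sqrt_pos (sqsum n f)). pose proof (sqrt_pos (sqsum n g)).
  pose proof (sqrt_sqrt _ HP) as EP. pose proof (sqrt_sqrt _ HQ) as EQ.
  assert (Hdot : dotsum n f g <= sqrt (sqsum n f) * sqrt (sqsum n g)).
  { destruct (Rle_dec (dotsum n f g) 0); [nra|].
    apply Rsqr_incr_0_var; unfold Rsqr; [rewrite <- EP, <- EQ in HC|]; nra. }
  rewrite <- (sqrt_square (sqrt (sqsum n f) + sqrt (sqsum n g))) by lra.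
  apply sqrt_le_1_alt. nra.
Qed.

Lemma edist_nonneg n x y : 0 <= edist n x y.
Proof. apply sqrt_pos. Qed.

Lemma edist_sym n x y : edist n x y = edist n y x.
Proof. unfold edist. f_equal. apply sqsum_ext_sq. intro; ring. Qed.

Lemma edist_refl n x : edist n x x = 0.
Proof.
  unfold edist. rewrite <- sqrt_0, <- (sqsum_const0 n). f_equal.
  apply sqsum_ext_sq. intro; ring.
Qed.

Lemma edist_triangle n x y z : edist n x z <= edist n x y + edist n y z.
Proof.
  unfold edist.
  replace (sqsum n (fun i => coord x i - coord z i))
    with (sqsum n (fun i => (coord x i - coord y i) + (coord y i - coord z i)))
    by (apply sqsum_ext_sq; intro; ring).
  apply minkowski.
Qed.

Lemma edist_eq0 n x y : edist n x y = 0 -> x = y.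
Proof.
  unfold edist. intro H. apply sqrt_eq_0 in H; [|apply sqsum_nonneg].
  destruct x as [x Hx], y as [y Hy].
  apply eq_sig_hprop; [intros; apply proof_irrelevance|]. simpl.
  apply functional_extensionality. intro i.
  destruct (Nat.lt_ge_cases i n) as [Hi|Hi].
  - pose proof (sqsum_eq0 _ _ H i Hi) as E. unfold coord in E. simpl in E. lra.
  - rewrite Hx, Hy; auto.
Qed.

Lemma edist_fst_le n p q : edist n (fst p) (fst q) <= edist2 n p q.
Proof.
  apply sqrt_le_1_alt.
  pose proof (sqsum_nonneg n (fun i => coord (snd p) i - coord (snd q) i)). lra.
Qed.

Lemma edist_snd_le n p q : edist n (snd p) (snd q) <= edist2 n p q.
Proof.
  apply sqrt_le_1_alt.
  pose proof (sqsum_nonneg n (fun i => coord (fst p) i - coord (fst q) i)). lra.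
Qed.

Lemma edist2_le_add n p q :
  edist2 n p q <= edist n (fst p) (fst q) + edist n (snd p) (snd q).
Proof. apply sqrt_add_le; apply sqsum_nonneg. Qed.

Lemma edist2_nonneg n p q : 0 <= edist2 n p q.
Proof. apply sqrt_pos. Qed.

Lemma Rpower_pos a s : 0 < Rpower a s.
Proof. apply exp_pos. Qed.

Lemma Rpower_0_r a : Rpower a 0 = 1.
Proof. unfold Rpower. rewrite Rmult_0_l. apply exp_0. Qed.

Lemma hterm_nonneg {X} (U : X -> Prop) r s : 0 <= hterm U r s.
Proof.
  unfold hterm. destruct excluded_middle_informative; [|lra].
  destruct Req_EM_T; [destruct Req_EM_T; lra|]. left; apply Rpower_pos.
Qed.

Lemma hterm_le_scaled {X Y} (U : X -> Prop) (V : Y -> Prop) r r' s L :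
  0 < L -> 0 <= s -> 0 <= r' -> r' <= L * r ->
  ((exists y, V y) -> exists x, U x) ->
  hterm V r' s <= Rpower L s * hterm U r s.
Proof.
  intros HL Hs Hr' Hrr HVU.
  pose proof (Rpower_pos L s) as HK.
  destruct (excluded_middle_informative (exists y, V y)) as [hv|hv].
  2:{ unfold hterm at 1. destruct excluded_middle_informative; [contradiction|].
      pose proof (hterm_nonneg U r s). nra. }
  pose proof (HVU hv) as hu.
  unfold hterm. do 2 (destruct excluded_middle_informative; [|contradiction]).
  destruct (Req_EM_T r' 0) as [E1|E1], (Req_EM_T s 0) as [E2|E2], (Req_EM_T r 0) as [E3|E3];
    try (subst s; rewrite ?Rpower_0_r; lra); try nra.
  - pose proof (Rpower_pos r s). nra.
  - rewrite Rpower_mult_distr by nra. apply Rle_Rpower_l; nra.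
Qed.

Lemma psum_le f g N : (forall i, f i <= g i) -> psum f N <= psum g N.
Proof. intro H; induction N; simpl; [apply H | specialize (H (S N)); lra]. Qed.

Lemma psum_scal K f N : psum (fun i => K * f i) N = K * psum f N.
Proof. induction N; simpl; [ring | rewrite IHN; ring]. Qed.

Section DiamNull.
Context {X : Type} (d : X -> X -> R).

Lemma is_diam_nonneg U r : (forall x y, 0 <= d x y) -> is_diam d U r -> 0 <= r.
Proof.
  intros Hd [[_ ->]|[[x Hx] Hl]]; [lra|].
  apply Rle_trans with (d x x); [apply Hd | apply Hl; exists x, x; auto].
Qed.

Lemma is_diam_ub U r x y : is_diam d U r -> U x -> U y -> d x y <= r.
Proof.
  intros [[He _]|[_ Hl]] Hx Hy; [exfalso; exact (He x Hx)|].
  apply Hl. exists x, y. auto.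
Qed.

Lemma is_diam_exists_le U b : 0 <= b -> (forall x y, U x -> U y -> d x y <= b) ->
  exists r, is_diam d U r /\ r <= b.
Proof.
  intros Hb Hub.
  destruct (classic (exists x, U x)) as [[x0 Hx0]|Hne].
  - set (T := fun v => exists x y, U x /\ U y /\ v = d x y).
    assert (HT : is_upper_bound T b) by (intros v (x & y & Hx & Hy & ->); auto).
    destruct (completeness T) as [m Hm]; [exists b; exact HT | exists (d x0 x0), x0, x0; auto|].
    exists m. split; [right; split; [exists x0|]; auto | apply Hm, HT].
  - exists 0. split; [left; split; [intros x Hx; apply Hne; exists x|]|]; auto.
Qed.

Lemma Hnull_subset s (E F : X -> Prop) : (forall x, E x -> F x) -> Hnull d s F -> Hnull d s E.
Proof.
  intros HEF HF delta eps Hd He.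
  destruct (HF delta eps Hd He) as (U & r & c & Hcov & Hrest).
  exists U, r, c. split; [intros x Ex; apply Hcov, HEF, Ex | exact Hrest].
Qed.

End DiamNull.

(* [Rel x y] reads "x controls y": a cover of E by sets of diameter r_i yields a cover
   of F by their Rel-images, of diameter at most L r_i. *)
Lemma Hnull_lipschitz_image {X Y} (dX : X -> X -> R) (dY : Y -> Y -> R)
  (E : X -> Prop) (F : Y -> Prop) (Rel : X -> Y -> Prop) (L : R) :
  0 < L -> (forall x x', 0 <= dX x x') -> (forall y y', 0 <= dY y y') ->
  (forall y, F y -> exists x, E x /\ Rel x y) ->
  (forall x x' y y', Rel x y -> Rel x' y' -> dY y y' <= L * dX x x') ->
  forall s, 0 <= s -> Hnull dX s E -> Hnull dY s F.
Proof.
  intros HL HnX HnY Hcov Hlip s Hs HE delta eps Hd He.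
  set (K := Rpower L s). assert (HK : 0 < K) by apply Rpower_pos.
  destruct (HE (delta / L) (eps / K)) as (U & r & c & HU & Hr & Hc & Hce);
    try (apply Rdiv_lt_0_compat; lra).
  set (V := fun i y => exists x, U i x /\ Rel x y).
  assert (HV : forall i, exists r', is_diam dY (V i) r' /\ r' <= L * r i).
  { intro i. destruct (Hr i) as [Hdi _].
    apply is_diam_exists_le.
    - pose proof (is_diam_nonneg dX _ _ HnX Hdi). nra.
    - intros y y' (x & Hx & Rx) (x' & Hx' & Rx').
      apply Rle_trans with (L * dX x x'); [apply Hlip; auto|].
      apply Rmult_le_compat_l; [lra | eapply is_diam_ub; eauto]. }
  destruct (choice _ HV) as [r' Hr'].
  exists V, r', (K * c). split; [|split; [|split]].
  - intros y Hy. destruct (Hcov y Hy) as (x & Ex & Rxy). destruct (HU x Ex) as [i Hi].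
    exists i, x. auto.
  - intro i. destruct (Hr' i) as [Hdiam Hle], (Hr i) as [_ Hri]. split; [exact Hdiam|].
    apply Rle_trans with (L * (delta / L)); [nra | right; field; lra].
  - intro N. apply Rle_trans with (psum (fun i => K * hterm (U i) (r i) s) N).
    + apply psum_le. intro i. destruct (Hr' i) as [Hdiam Hle].
      apply hterm_le_scaled; auto; [eapply is_diam_nonneg; eauto|].
      intros (y & x & Hx & _). exists x; exact Hx.
    + rewrite psum_scal. apply Rmult_le_compat_l; [lra | apply Hc].
  - apply Rlt_le_trans with (K * (eps / K)); [apply Rmult_lt_compat_l; lra | right; field; lra].
Qed.

Lemma glb_exists_nonneg (S : R -> Prop) :
  (exists s, S s) -> (forall s, S s -> 0 <= s) -> exists m, is_glb_R S m.
Proof.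
  intros [s0 Hs0] Hpos.
  destruct (completeness (fun x => S (- x))) as [l [Hl1 Hl2]].
  { exists 0. intros x Hx. specialize (Hpos _ Hx). lra. }
  { exists (- s0). rewrite Ropp_involutive. exact Hs0. }
  exists (- l). split.
  - intros s Hs. assert (- s <= l) by (apply Hl1; rewrite Ropp_involutive; exact Hs). lra.
  - intros l' Hl'. assert (l <= - l') by (apply Hl2; intros x Hx; specialize (Hl' _ Hx); lra).
    lra.
Qed.

Lemma hdim_le_of_Hnull {X Y} (dX : X -> X -> R) (dY : Y -> Y -> R) E F :
  (forall s, 0 <= s -> Hnull dY s F -> Hnull dX s E) ->
  Rbar_le (hdim dX E) (hdim dY F).
Proof.
  intro H. unfold hdim.
  destruct (excluded_middle_informative (exists s, 0 <= s /\ Hnull dY s F)) as [hF|hF].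
  2:{ destruct excluded_middle_informative; exact I. }
  destruct (excluded_middle_informative (exists s, 0 <= s /\ Hnull dX s E)) as [hE|hE].
  2:{ exfalso. destruct hF as (s & h1 & h2). apply hE. exists s. auto. }
  simpl.
  destruct (epsilon_spec (inhabits 0) (is_glb_R (fun s => 0 <= s /\ Hnull dX s E)))
    as [GE1 _]; [apply glb_exists_nonneg; [exact hE | intros s []; auto]|].
  destruct (epsilon_spec (inhabits 0) (is_glb_R (fun s => 0 <= s /\ Hnull dY s F)))
    as [_ GF2]; [apply glb_exists_nonneg; [exact hF | intros s []; auto]|].
  apply GF2. intros s [h1 h2]. apply GE1. auto.
Qed.

Lemma Rbar_le_min a b c : Rbar_le a b -> Rbar_le a c -> Rbar_le a (Rbar_min b c).
Proof. destruct a, b, c; simpl; auto. intros. apply Rmin_glb; auto. Qed.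

Lemma list_pos_lower_bound {I} (rad : I -> R) (l : list I) :
  (forall i, 0 < rad i) -> exists rho, 0 < rho /\ forall i, In i l -> rho <= rad i.
Proof.
  intro Hpos. induction l as [|j l [rho [Hrho Hl]]].
  - exists 1. split; [lra | intros i []].
  - exists (Rmin (rad j) rho). split; [apply Rmin_glb_lt; auto|].
    intros i [<-|Hi]; [apply Rmin_l | eapply Rle_trans; [apply Rmin_r | auto]].
Qed.

Section CompactMetric.
Context {X : Type} (d : X -> X -> R).
Hypothesis d_refl : forall x, d x x = 0.
Hypothesis d_sym : forall x y, d x y = d y x.
Hypothesis d_triangle : forall x y z, d x z <= d x y + d y z.

(* Lebesgue-number argument. *)
Lemma mcompact_uniform_radius (K : X -> Prop) (P : R -> X -> Prop) :
  mcompact d K ->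
  (forall r r' y, r' <= r -> P r y -> P r' y) ->
  (forall x, K x -> exists r, 0 < r /\ forall y, d x y < r -> P r y) ->
  exists rho, 0 < rho /\ forall y, K y -> P rho y.
Proof.
  intros HK Hmono Hloc.
  set (good := fun p : X * R => 0 < snd p /\ forall y, d (fst p) y < snd p -> P (snd p) y).
  destruct (HK {p | good p} (fun i y => d (fst (proj1_sig i)) y < snd (proj1_sig i)))
    as [l Hl].
  - intros [[x r] Hg] z Hz. simpl in *. exists (r - d x z). split; [lra|].
    intros w Hw. pose proof (d_triangle x z w). lra.
  - intros x Kx. destruct (Hloc x Kx) as [r Hr].
    exists (exist good (x, r) Hr). simpl. rewrite d_refl. lra.
  - destruct (list_pos_lower_bound (fun i : {p | good p} => snd (proj1_sig i)) l)
      as [rho [Hrho Hle]]; [intros [p Hp]; exact (proj1 Hp)|].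
    exists rho. split; [exact Hrho|]. intros y Ky.
    destruct (Hl y Ky) as [[[x r] [Hr Hball]] [Hin Hy]]. simpl in *.
    apply Hmono with r; [exact (Hle _ Hin) | apply Hball, Hy].
Qed.

Lemma mcompact_dist_pos (A : X -> Prop) y :
  mcompact d A -> (forall a, A a -> 0 < d y a) ->
  exists rho, 0 < rho /\ forall a, A a -> rho <= d y a.
Proof.
  intros HA Hpos.
  apply (mcompact_uniform_radius A (fun r a => r <= d y a) HA); [intros; lra|].
  intros a Aa. exists (d y a / 2). pose proof (Hpos a Aa). split; [lra|].
  intros a' Ha'. pose proof (d_triangle y a' a). rewrite (d_sym a' a) in *. lra.
Qed.

End CompactMetric.

Section Corollary.
Variables (n : nat) (A B D : Rn n -> Prop) (phi : Rn n -> Rn n -> Rn n).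

Lemma parameter_lipschitz C0 M0 t t' x x' : 0 <= C0 ->
  (forall t x y, D t -> B x -> B y -> edist n (phi t x) (phi t y) <= C0 * edist n x y) ->
  (forall x t t', B x -> D t -> D t' -> edist n (phi t' x) (phi t x) >= M0 * edist n t' t) ->
  D t -> D t' -> B x -> B x' ->
  M0 * edist n t t' <= (1 + C0) * edist2 n (phi t x, x) (phi t' x', x').
Proof.
  intros HC0 Ha Hb Dt Dt' Bx Bx'.
  pose proof (Hb x t' t Bx Dt' Dt) as h1.
  pose proof (edist_triangle n (phi t x) (phi t' x') (phi t' x)) as h2.
  pose proof (edist_fst_le n (phi t x, x) (phi t' x', x')) as h3.
  pose proof (edist_snd_le n (phi t x, x) (phi t' x', x')) as h4.
  pose proof (Ha t' x' x Dt' Bx' Bx) as h5.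
  simpl in *. rewrite (edist_sym n x' x) in h5.
  assert (C0 * edist n x x' <= C0 * edist2 n (phi t x, x) (phi t' x', x'))
    by (apply Rmult_le_compat_l; assumption).
  lra.
Qed.

Lemma Delta_closed_in :
  mcompact (edist n) A -> mcompact (edist n) B ->
  (forall p, D (fst p) -> B (snd p) ->
     forall eps, 0 < eps -> exists del, 0 < del /\
       forall q, D (fst q) -> B (snd q) -> edist2 n q p < del ->
         edist n (phi (fst q) (snd q)) (phi (fst p) (snd p)) < eps) ->
  closed_in (edist n) D (fun t => D t /\ exists x, B x /\ A (phi t x)).
Proof.
  intros HA HB Hcont. split; [intros t [Dt _]; exact Dt|].
  intros t Dt Hcl. apply NNPP. intro Hnot.
  set (avoid := fun r x' => forall t', D t' -> B x' -> edist n t' t < r -> ~ A (phi t' x')).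
  assert (Hloc : forall x, B x -> exists r, 0 < r /\ forall x', edist n x x' < r -> avoid r x').
  { intros x Bx.
    destruct (mcompact_dist_pos (edist n) (edist_refl n) (edist_sym n) (edist_triangle n) A (phi t x) HA)
      as [rho [Hrho Hgap]].
    { intros a Aa. destruct (edist_nonneg n (phi t x) a) as [|E]; [assumption|].
      exfalso. apply Hnot. split; [exact Dt|]. exists x. split; [exact Bx|].
      symmetry in E. apply edist_eq0 in E. subst a. exact Aa. }
    destruct (Hcont (t, x) Dt Bx rho Hrho) as [del [Hdel Hnear]].
    exists (del / 2). split; [lra|]. intros x' Hx' t' Dt' Bx' Ht' Ha.
    pose proof (edist2_le_add n (t', x') (t, x)) as Hsum. simpl in Hsum.
    rewrite (edist_sym n x' x) in Hsum.
    specialize (Hnear (t', x') Dt' Bx' ltac:(lra)). specialize (Hgap _ Ha).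
    rewrite edist_sym in Hgap. simpl in Hnear. lra. }
  destruct (mcompact_uniform_radius (edist n) (edist_refl n) (edist_triangle n)
              B avoid HB) as [rho [Hrho Havoid]]; [|exact Hloc|].
  { intros r r' x' Hrr Hr t' Dt' Bx' Ht'. apply Hr; auto. lra. }
  destruct (Hcl rho Hrho) as (t' & (Dt' & x' & Bx' & Ax') & Ht').
  rewrite edist_sym in Ht'. exact (Havoid x' Bx' t' Dt' Bx' Ht' Ax').
Qed.

End Corollary.

Theorem corollary2 (n : nat) (A B D : Rn n -> Prop) (phi : Rn n -> Rn n -> Rn n)
  (Ha : exists C0, 0 < C0 /\ forall t x y, D t -> B x -> B y ->
          edist n (phi t x) (phi t y) <= C0 * edist n x y)
  (Hb : exists M0, 0 < M0 /\ forall x t t', B x -> D t -> D t' ->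
          edist n (phi t' x) (phi t x) >= M0 * edist n t' t) :
  let Delta := fun t => D t /\ exists x, B x /\ A (phi t x) in
  Rbar_le (hdim (edist n) Delta)
          (Rbar_min (hdim (edist2 n) (fun p => A (fst p) /\ B (snd p)))
                    (hdim (edist n) D))
  /\ (mcompact (edist n) A -> mcompact (edist n) B ->
      (forall p, D (fst p) -> B (snd p) ->
         forall eps, 0 < eps -> exists del, 0 < del /\
           forall q, D (fst q) -> B (snd q) -> edist2 n q p < del ->
             edist n (phi (fst q) (snd q)) (phi (fst p) (snd p)) < eps) ->
      closed_in (edist n) D Delta).
Proof.
  intros Delta. destruct Ha as [C0 [HC0 Ha]], Hb as [M0 [HM0 Hb]].
  split; [apply Rbar_le_min; apply hdim_le_of_Hnull; intros s Hs HN | apply Delta_closed_in].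
  - apply (Hnull_lipschitz_image (edist2 n) (edist n)
             (fun p => A (fst p) /\ B (snd p)) Delta
             (fun p t => D t /\ B (snd p) /\ fst p = phi t (snd p)) ((1 + C0) / M0)); auto.
    + apply Rdiv_lt_0_compat; lra.
    + apply edist2_nonneg.
    + apply edist_nonneg.
    + intros t (Dt & x & Bx & Ax). exists (phi t x, x). auto.
    + intros [a x] [a' x'] t t' (Dt & Bx & Ea) (Dt' & Bx' & Ea').
      simpl in *. subst a a'.
      pose proof (parameter_lipschitz n B D phi C0 M0 t t' x x' ltac:(lra) Ha Hb Dt Dt' Bx Bx').
      apply Rmult_le_reg_l with M0; [lra|].
      replace (M0 * ((1 + C0) / M0 * edist2 n (phi t x, x) (phi t' x', x')))
        with ((1 + C0) * edist2 n (phi t x, x) (phi t' x', x')) by (field; lra).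
      assumption.
  - apply (Hnull_subset (edist n) s Delta D); [intros t []|]; auto.
Qed.
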